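(* Consider the two equations \[ \text{(A)}\quad \partial_{tt}u-\partial_{xx}u=(\partial_t u)^2, \qquad \text{(B)}\quad \partial_{tt}u-\partial_{xx}u=(\partial_t u)^2-(\partial_x u)^2 , \] for $u=u(t,x)$ real-valued, $x\in\mathbb{R}$. For $T>0$, $x_0\in\mathbb{R}$ let $\Gamma(T,x_0):=\{(t,x)\in[0,T)\times\mathbb{R}: |x-x_0|\le T-t\}$. \begin{enumerate} \item For any $T>0$ and $x_0\in\mathbb{R}$, neither (A) nor (B) admits a smooth exact self-similar blow-up solution in $\Gamma(T,x_0)$, i.e. there is no non-constant $U\in C^\infty([-1,1])$ such that $u(t,x)=U\big(\frac{x-x_0}{T-t}\big)$ solves (A), respectively (B), in $\Gamma(T,x_0)$. \item For all $T>0$ and $\kappa,x_0\in\mathbb{R}$, the functions \[ u_{\alpha,\beta,\kappa,T,x_0}(t,x)=-\alpha\log\Big(1-\frac{t}{T}\Big)+U_{\alpha,\beta}\Big(\frac{x-x_0}{T-t}\Big)+\kappa \] are smooth solutions, well defined in $\Gamma(T,x_0)$, which blow up at time $T$, where: for (A), $(\alpha,\beta)\in(0,1]\times\{0,\infty\}$ and \[ U_{\alpha,0}(y)=-\alpha\ln(1-\sqrt{1-\alpha}\,y),\qquad U_{\alpha,\infty}(y)=-\alpha\ln(1+\sqrt{1-\alpha}\,y); \] for (B), $(\alpha,\beta)\in\mathbb{Z}_+\times\mathbb{R}_+$ (with $\mathbb{R}_+=(0,\infty)$) and \[ U_{\alpha,\beta}(y)=-\log\big((1+y)^\alpha+\beta(1-y)^\alpha\big)+\log(1+\beta).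 \] This gives a five-parameter family $(\alpha,\beta,\kappa,T,x_0)$ of smooth generalized self-similar blow-up solutions with logarithmic growth. \end{enumerate}
   Context: A (exact) self-similar solution is one of the form $u(t,x)=U(y)$ with $y=\frac{x-x_0}{T-t}$; the backward light cone $|x-x_0|\le T-t$ corresponds to $|y|\le 1$. *)

From Stdlib Require Import Reals Lra List.
From Coquelicot Require Import Coquelicot.
Open Scope R_scope.

Definition cone (T x0 t x : R) : Prop := 0 <= t < T /\ Rabs (x - x0) <= T - t.

Definition cone_open (T x0 t x : R) : Prop := 0 <= t < T /\ Rabs (x - x0) < T - t.

Definition d_t (u : R -> R -> R) (t x : R) : R := Derive (fun s => u s x) t.
Definition d_x (u : R -> R -> R) (t x : R) : R := Derive (fun y => u t y) x.

Definition solves_A (u : R -> R -> R) (D : R -> R -> Prop) : Prop :=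
  forall t x, D t x ->
    d_t (d_t u) t x - d_x (d_x u) t x = (d_t u t x) ^ 2.

Definition solves_B (u : R -> R -> R) (D : R -> R -> Prop) : Prop :=
  forall t x, D t x ->
    d_t (d_t u) t x - d_x (d_x u) t x = (d_t u t x) ^ 2 - (d_x u t x) ^ 2.

(* U in C^infty([a,b]): all derivatives exist on (a,b) and extend
   continuously to [a,b]; U itself is continuous on [a,b]. *)
Definition smooth_closed (U : R -> R) (a b : R) : Prop :=
  (forall y, a <= y <= b ->
     filterlim U (within (fun z => a <= z <= b) (locally y)) (locally (U y))) /\
  forall n : nat,
    (forall y, a < y < b -> ex_derive_n U n y) /\
    (forall y, a <= y <= b -> exists l : R,
       filterlim (Derive_n U n) (within (fun z => a < z < b) (locally y)) (locally l)).

Definition nonconstant_on (U : R -> R) (a b : R) : Prop :=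
  exists y1 y2, a <= y1 <= b /\ a <= y2 <= b /\ U y1 <> U y2.

Definition selfsim (U : R -> R) (T x0 : R) : R -> R -> R :=
  fun t x => U ((x - x0) / (T - t)).

(* Iterated partial derivatives: true = d/dt, false = d/dx (applied right to left). *)
Fixpoint iter_partial (ds : list bool) (u : R -> R -> R) : R -> R -> R :=
  match ds with
  | nil => u
  | d :: ds' =>
      let v := iter_partial ds' u in
      if d then d_t v else d_x v
  end.

Definition smooth_near (u : R -> R -> R) (t x : R) : Prop :=
  exists eps : R, 0 < eps /\
    forall t' x', Rabs (t' - t) < eps -> Rabs (x' - x) < eps ->
      forall ds : list bool,
        ex_derive (fun s => iter_partial ds u s x') t' /\
        ex_derive (fun y => iter_partial ds u t' y) x' /\
        continuous (fun p : R * R => iter_partial ds u (fst p) (snd p)) (t', x').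

Definition smooth_on (u : R -> R -> R) (D : R -> R -> Prop) : Prop :=
  forall t x, D t x -> smooth_near u t x.

Definition blows_up_at (u : R -> R -> R) (T x0 : R) : Prop :=
  forall M : R, exists delta : R, 0 < delta /\
    forall t, T - delta < t < T ->
      exists x, Rabs (x - x0) <= T - t /\ M < Rabs (u t x).

Inductive betaA := Beta0 | BetaInf.

Definition argA (b : betaA) (alpha y : R) : R :=
  match b with
  | Beta0 => 1 - sqrt (1 - alpha) * y
  | BetaInf => 1 + sqrt (1 - alpha) * y
  end.

Definition UA (b : betaA) (alpha y : R) : R := - alpha * ln (argA b alpha y).

Definition argB (alpha : nat) (beta y : R) : R :=
  (1 + y) ^ alpha + beta * (1 - y) ^ alpha.

Definition UB (alpha : nat) (beta y : R) : R := - ln (argB alpha beta y) + ln (1 + beta).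

Definition uA (b : betaA) (alpha kappa T x0 : R) : R -> R -> R :=
  fun t x => - alpha * ln (1 - t / T) + UA b alpha ((x - x0) / (T - t)) + kappa.

Definition uB (alpha : nat) (beta kappa T x0 : R) : R -> R -> R :=
  fun t x => - INR alpha * ln (1 - t / T) + UB alpha beta ((x - x0) / (T - t)) + kappa.

(* For [u = U((x - x0)/(T - t))] both equations reduce, on the slice [t = 0], to the
   profile equation [(y^2 - 1) U'' + 2 y U' = q(y) U'^2] on [(-1, 1)], with [q = y^2] for (A)
   and [q = y^2 - 1] for (B).  Then [W = (y^2 - 1) U'] solves the Riccati equation
   [W' = r W^2] with [r = q / (y^2 - 1)^2], so [1/W + R] is locally constant for a primitive
   [R] of [r].  In both cases [R] maps [(-1, 1)] onto the reals, hence [1/W] would reach [0]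
   inside the interval: [W] vanishes identically and [U] is constant.
   The explicit solutions are elementary functions of [(t, x)] on the closed cone, so all
   their iterated partial derivatives exist and are continuous and the equations become
   rational identities; on the axis [x = x0] the profile term vanishes and only the
   logarithmic blow-up [- alpha ln (1 - t/T)] remains. *)

From Stdlib Require Import Reals Lra Lia List.
From Coquelicot Require Import Coquelicot.
Open Scope R_scope.

(** * Riccati equations on an interval *)

Lemma locally_open_preimage {T : UniformSpace} (f : T -> R) p (P : R -> Prop) :
  continuous f p -> open P -> P (f p) -> locally p (fun q => P (f q)).
Proof. intros Hf HP Hp. apply Hf, HP, Hp. Qed.

Lemma continuity_pt_of_ex_derive (f : R -> R) y : ex_derive f y -> continuity_pt f y.
Proof. intros Hf; apply continuity_pt_filterlim; exact (ex_derive_continuous f y Hf). Qed.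

Section OpenInterval.

Variables a b : R.

Let inside y := a < y < b.

Lemma open_interval : open inside.
Proof. apply open_and; [apply open_gt | apply open_lt]. Qed.

Lemma interval_convex y1 y2 z : inside y1 -> inside y2 ->
  Rmin y1 y2 <= z <= Rmax y1 y2 -> inside z.
Proof. unfold inside, Rmin, Rmax; destruct Rle_dec; lra. Qed.

Lemma derive0_constant (F : R -> R) :
  (forall y, inside y -> is_derive F y 0) ->
  forall y1 y2, inside y1 -> inside y2 -> F y2 = F y1.
Proof.
  intros HF y1 y2 H1 H2.
  destruct (MVT_gen F y1 y2 (fun _ => 0)) as [c [_ Hc]].
  - intros z Hz; apply HF, (interval_convex y1 y2); auto; lra.
  - intros z Hz; apply continuity_pt_of_ex_derive.
    exists 0; apply HF, (interval_convex y1 y2 z H1 H2 Hz).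
  - lra.
Qed.

(* [E exp (- RInt c y1 y)] has zero derivative. *)
Lemma linear_ode_zero (E c : R -> R) :
  (forall y, inside y -> is_derive E y (c y * E y)) ->
  (forall y, inside y -> continuous c y) ->
  forall y1, inside y1 -> E y1 = 0 -> forall y, inside y -> E y = 0.
Proof.
  intros HE Hc y1 H1 E1 y Hy.
  set (C := fun z => RInt c y1 z).
  assert (HC : forall z, inside z -> is_derive C z (c z)).
  { intros z Hz. apply (is_derive_RInt c C y1 z); [|apply Hc, Hz].
    apply (filter_imp inside); [|apply open_interval, Hz].
    intros w Hw. apply (RInt_correct c y1 w), ex_RInt_continuous.
    intros v Hv. apply Hc, (interval_convex y1 w); auto. }
  assert (Hconst : forall z, inside z -> is_derive (fun w => E w * exp (- C w)) z 0).
  { intros z Hz.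
    replace 0 with (c z * E z * exp (- C z) + E z * (- c z * exp (- C z))) by ring.
    apply (is_derive_mult E (fun w => exp (- C w))); [apply HE, Hz | | intros; apply Rmult_comm].
    apply (is_derive_comp exp (fun w => - C w)).
    - apply is_derive_Reals, derivable_pt_lim_exp.
    - apply (is_derive_opp C z (c z)), HC, Hz. }
  pose proof (derive0_constant _ Hconst y1 y H1 Hy) as Hy1; simpl in Hy1.
  rewrite E1, Rmult_0_l in Hy1.
  destruct (Rmult_integral _ _ Hy1) as [|Hexp]; [assumption|].
  pose proof (exp_pos (- C y)); lra.
Qed.

(* If [W y1 <> 0], [E = 1 - W (c - R)] with [c = R y1 + 1 / W y1] solves a linear equation
   and vanishes at [y1], yet [E = 1] wherever [R = c]. *)
Lemma riccati_zero (W r R : R -> R) :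
  (forall y, inside y -> is_derive W y (r y * W y ^ 2)) ->
  (forall y, inside y -> is_derive R y (r y)) ->
  (forall y, inside y -> continuous r y) ->
  (forall c, exists y, inside y /\ R y = c) ->
  forall y, inside y -> W y = 0.
Proof.
  intros HW HR Hr Hsurj y1 H1.
  destruct (Req_dec (W y1) 0) as [|Hne]; [assumption|exfalso].
  set (c := R y1 + / W y1).
  set (E := fun y => 1 - W y * (c - R y)).
  assert (HE : forall y, inside y -> E y = 0).
  { apply (linear_ode_zero E (fun y => r y * W y)) with y1; auto.
    - intros y Hy. unfold E.
      auto_derive; [split; [exists (r y * W y ^ 2); apply HW, Hy|]; split;
                    [exists (r y); apply HR, Hy | exact I] |].
      change (fun z => W z) with W; change (fun z => R z) with R.
      rewrite (is_derive_unique _ _ _ (HW y Hy)), (is_derive_unique _ _ _ (HR y Hy)).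
      ring.
    - intros y Hy. apply (continuous_mult r W); [apply Hr, Hy|].
      apply (ex_derive_continuous W); exists (r y * W y ^ 2); apply HW, Hy.
    - unfold E, c. field. exact Hne. }
  destruct (Hsurj c) as [y [Hy HRy]].
  specialize (HE y Hy). unfold E in HE. rewrite HRy in HE. lra.
Qed.

End OpenInterval.

Lemma sq_minus_one_neq0 y : -1 < y < 1 -> y ^ 2 - 1 <> 0.
Proof. intros Hy; nra. Qed.

Lemma profile_ode_zero (q R V : R -> R) :
  (forall y, -1 < y < 1 -> ex_derive V y) ->
  (forall y, -1 < y < 1 -> (y ^ 2 - 1) * Derive V y + 2 * y * V y = q y * V y ^ 2) ->
  (forall y, -1 < y < 1 -> continuous q y) ->
  (forall y, -1 < y < 1 -> is_derive R y (q y / (y ^ 2 - 1) ^ 2)) ->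
  (forall c, exists y, -1 < y < 1 /\ R y = c) ->
  forall y, -1 < y < 1 -> V y = 0.
Proof.
  intros HV Hode Hq HR Hsurj y Hy.
  assert (HW : forall y, -1 < y < 1 -> (y ^ 2 - 1) * V y = 0).
  { apply (riccati_zero (-1) 1 (fun y => (y ^ 2 - 1) * V y) (fun y => q y / (y ^ 2 - 1) ^ 2) R);
      [| exact HR | | exact Hsurj].
    - intros z Hz. pose proof (sq_minus_one_neq0 z Hz).
      auto_derive; [exact (HV z Hz)|].
      change (fun w => V w) with V.
      transitivity ((z ^ 2 - 1) * Derive V z + 2 * z * V z); [ring|].
      rewrite Hode by exact Hz. field. exact H.
    - intros z Hz. apply (continuous_mult q (fun w => / (w ^ 2 - 1) ^ 2)); [apply Hq, Hz|].
      apply (ex_derive_continuous (fun w => / (w ^ 2 - 1) ^ 2)).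
      pose proof (sq_minus_one_neq0 z Hz). auto_derive. simpl in H |- *. nra. }
  specialize (HW y Hy). apply Rmult_integral in HW.
  destruct HW as [H|H]; [exfalso; exact (sq_minus_one_neq0 y Hy H)|exact H].
Qed.

Definition tanh_half (s : R) : R := (exp s - 1) / (exp s + 1).

Definition two_artanh (y : R) : R := ln ((1 + y) / (1 - y)).

Lemma tanh_half_bounds s : -1 < tanh_half s < 1.
Proof.
  pose proof (exp_pos s). unfold tanh_half.
  split; [apply Rlt_div_r | apply Rlt_div_l]; lra.
Qed.

Lemma two_artanh_tanh_half s : two_artanh (tanh_half s) = s.
Proof.
  pose proof (exp_pos s). unfold two_artanh, tanh_half.
  replace ((1 + (exp s - 1) / (exp s + 1)) / (1 - (exp s - 1) / (exp s + 1))) with (exp s)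
    by (field; lra).
  apply ln_exp.
Qed.

Lemma tanh_half_opp s : tanh_half (- s) = - tanh_half s.
Proof. pose proof (exp_pos s). unfold tanh_half. rewrite exp_Ropp. field. lra. Qed.

Lemma tanh_half_pos s : 0 < s -> 0 < tanh_half s.
Proof.
  intros Hs. pose proof (exp_ineq1 s ltac:(lra)). unfold tanh_half.
  apply Rdiv_lt_0_compat; lra.
Qed.

Definition primitiveB (y : R) : R := - two_artanh y / 2.

Lemma is_derive_primitiveB y : -1 < y < 1 ->
  is_derive primitiveB y ((y ^ 2 - 1) / (y ^ 2 - 1) ^ 2).
Proof.
  intros Hy. unfold primitiveB, two_artanh. auto_derive.
  - repeat split; try lra. apply Rdiv_lt_0_compat; lra.
  - field. repeat split; nra.
Qed.

Lemma primitiveB_surjective c : exists y, -1 < y < 1 /\ primitiveB y = c.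
Proof.
  exists (tanh_half (-2 * c)). split; [apply tanh_half_bounds|].
  unfold primitiveB. rewrite two_artanh_tanh_half. field.
Qed.

Definition primitiveA (y : R) : R := - (y / (2 * (y ^ 2 - 1)) + two_artanh y / 4).

Lemma is_derive_primitiveA y : -1 < y < 1 ->
  is_derive primitiveA y (y ^ 2 / (y ^ 2 - 1) ^ 2).
Proof.
  intros Hy. unfold primitiveA, two_artanh. auto_derive.
  - repeat split; try nra. apply Rdiv_lt_0_compat; lra.
  - field. repeat split; nra.
Qed.

Lemma primitiveA_tanh_half s :
  primitiveA (tanh_half s) = (exp s - / exp s) / 8 - s / 4.
Proof.
  pose proof (exp_pos s). unfold primitiveA. rewrite two_artanh_tanh_half.
  unfold tanh_half. field. split; nra.
Qed.

Lemma exp_sub_inv_large M : exists s, 0 < s /\ M < (exp s - / exp s) / 8 - s / 4.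
Proof.
  set (s := 4 + 32 * (Rabs M + 1)). exists s.
  pose proof (Rle_abs M). pose proof (Rabs_pos M).
  assert (Hs : 4 < s) by (unfold s; lra).
  assert (Hexp : 1 + s + s * s / 4 < exp s).
  { replace s with (s / 2 + s / 2) at 4 by field. rewrite exp_plus.
    pose proof (exp_ineq1 (s / 2) ltac:(lra)). nra. }
  assert (Hinv : / exp s < 1).
  { apply (Rmult_lt_reg_l (exp s)); [apply exp_pos|]. rewrite Rinv_r, Rmult_1_r; nra. }
  assert (Hquad : s * s / 32 - s / 8 = s * (Rabs M + 1)) by (unfold s; field).
  assert (M < s * (Rabs M + 1)) by nra.
  split; lra.
Qed.

Lemma primitiveA_surjective c : exists y, -1 < y < 1 /\ primitiveA y = c.
Proof.
  destruct (exp_sub_inv_large (Rabs c)) as [s [Hs Hlarge]].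
  pose proof (Rle_abs c). pose proof (Rle_abs (- c)). rewrite Rabs_Ropp in *.
  assert (Hneg : primitiveA (tanh_half (- s)) - c < 0).
  { rewrite primitiveA_tanh_half, exp_Ropp, Rinv_inv. lra. }
  assert (Hpos : 0 < primitiveA (tanh_half s) - c) by (rewrite primitiveA_tanh_half; lra).
  destruct (Ranalysis5.IVT_interv (fun y => primitiveA y - c) (tanh_half (- s)) (tanh_half s))
    as [y [Hy Hy0]]; [| | exact Hneg | exact Hpos |].
  - intros y Hy. apply continuity_pt_of_ex_derive.
    pose proof (tanh_half_bounds s). pose proof (tanh_half_bounds (- s)).
    apply (ex_derive_minus primitiveA (fun _ => c)); [|apply ex_derive_const].
    eexists; apply is_derive_primitiveA; lra.
  - rewrite tanh_half_opp. pose proof (tanh_half_pos s Hs). lra.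
  - exists y. pose proof (tanh_half_bounds s). pose proof (tanh_half_bounds (- s)).
    split; lra.
Qed.

(** * Exact self-similar solutions *)

Section SelfSimilar.

Variables (U : R -> R) (T x0 : R).
Hypothesis HT : 0 < T.
Hypothesis HU1 : forall y, -1 < y < 1 -> ex_derive U y.
Hypothesis HU2 : forall y, -1 < y < 1 -> ex_derive (Derive U) y.

Lemma d_t_selfsim s z : T - s <> 0 -> -1 < (z - x0) / (T - s) < 1 ->
  d_t (selfsim U T x0) s z = Derive U ((z - x0) / (T - s)) * ((z - x0) / (T - s) ^ 2).
Proof.
  intros Hs Hz. unfold d_t, selfsim, Rminus, Rdiv in *.
  apply is_derive_unique. auto_derive.
  - repeat split; [apply HU1, Hz | exact Hs].
  - change (fun y => U y) with U. field. exact Hs.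
Qed.

Lemma d_x_selfsim s z : T - s <> 0 -> -1 < (z - x0) / (T - s) < 1 ->
  d_x (selfsim U T x0) s z = Derive U ((z - x0) / (T - s)) / (T - s).
Proof.
  intros Hs Hz. unfold d_x, selfsim, Rminus, Rdiv in *.
  apply is_derive_unique. auto_derive.
  - apply HU1, Hz.
  - change (fun y => U y) with U. field. exact Hs.
Qed.

Lemma d_tt_selfsim y : -1 < y < 1 ->
  d_t (d_t (selfsim U T x0)) 0 (x0 + T * y)
  = (Derive (Derive U) y * y ^ 2 + 2 * y * Derive U y) / T ^ 2.
Proof.
  intros Hy. set (z := x0 + T * y).
  assert (Ey : (z - x0) / (T - 0) = y) by (unfold z; field; lra).
  assert (Hnear : locally 0 (fun s => T - s <> 0 /\ -1 < (z - x0) / (T - s) < 1)).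
  { apply filter_and.
    - apply (locally_open_preimage (fun s => T - s) 0 (fun r => r <> 0));
        [apply (ex_derive_continuous (fun s => T - s)); auto_derive; exact I
        | apply open_neq | lra].
    - apply (locally_open_preimage (fun s => (z - x0) / (T - s)) 0 (fun r => -1 < r < 1));
        [apply (ex_derive_continuous (fun s => (z - x0) / (T - s))); auto_derive; lra
        | apply (open_interval (-1) 1) | rewrite Ey; exact Hy]. }
  unfold d_t at 1.
  rewrite (Derive_ext_loc _ (fun s => Derive U ((z - x0) / (T - s)) * ((z - x0) / (T - s) ^ 2)))
    by (apply (filter_imp _ _ (fun s Hs => d_t_selfsim s z (proj1 Hs) (proj2 Hs)) Hnear)).
  replace (z - x0) with (T * y) by (unfold z; ring).
  apply is_derive_unique. auto_derive;
    replace (T * y * / (T + - 0)) with y by (field; lra).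
  - repeat split; [apply HU2, Hy | lra | nra].
  - change (fun w => Derive U w) with (Derive U). field. lra.
Qed.

Lemma d_xx_selfsim y : -1 < y < 1 ->
  d_x (d_x (selfsim U T x0)) 0 (x0 + T * y) = Derive (Derive U) y / T ^ 2.
Proof.
  intros Hy.
  assert (HT0 : T - 0 <> 0) by lra.
  assert (Hnear : locally (x0 + T * y) (fun z => -1 < (z - x0) / (T - 0) < 1)).
  { apply (locally_open_preimage (fun z => (z - x0) / (T - 0)) _ (fun r => -1 < r < 1));
      [apply (ex_derive_continuous (fun z => (z - x0) / (T - 0))); auto_derive; lra
      | apply (open_interval (-1) 1) |].
    replace ((x0 + T * y - x0) / (T - 0)) with y by (field; lra). exact Hy. }
  unfold d_x at 1.
  rewrite (Derive_ext_loc _ (fun z => Derive U ((z - x0) / (T - 0)) / (T - 0)))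
    by (apply (filter_imp _ _ (fun z Hz => d_x_selfsim 0 z HT0 Hz) Hnear)).
  rewrite Rminus_0_r. apply is_derive_unique. auto_derive;
    replace ((x0 + T * y + - x0) * / T) with y by (field; lra).
  - apply HU2, Hy.
  - change (fun w => Derive U w) with (Derive U). field. lra.
Qed.

Lemma d_t_selfsim_slice y : -1 < y < 1 ->
  d_t (selfsim U T x0) 0 (x0 + T * y) = Derive U y * y / T.
Proof.
  intros Hy. rewrite d_t_selfsim; replace ((x0 + T * y - x0) / (T - 0)) with y by (field; lra).
  - field. lra.
  - lra.
  - exact Hy.
Qed.

Lemma d_x_selfsim_slice y : -1 < y < 1 ->
  d_x (selfsim U T x0) 0 (x0 + T * y) = Derive U y / T.
Proof.
  intros Hy. rewrite d_x_selfsim; replace ((x0 + T * y - x0) / (T - 0)) with y by (field; lra).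
  - rewrite Rminus_0_r. reflexivity.
  - lra.
  - exact Hy.
Qed.

Lemma cone_open_slice y : -1 < y < 1 -> cone_open T x0 0 (x0 + T * y).
Proof.
  intros Hy. split; [lra|].
  replace (x0 + T * y - x0) with (T * y) by ring.
  rewrite Rabs_mult, (Rabs_pos_eq T) by lra.
  assert (Rabs y < 1) by (apply Rabs_def1; lra). nra.
Qed.

Lemma selfsim_profile_ode_A : solves_A (selfsim U T x0) (cone_open T x0) ->
  forall y, -1 < y < 1 ->
  (y ^ 2 - 1) * Derive (Derive U) y + 2 * y * Derive U y = y ^ 2 * Derive U y ^ 2.
Proof.
  intros Hsol y Hy. specialize (Hsol 0 (x0 + T * y) (cone_open_slice y Hy)).
  apply (Rmult_eq_reg_r (/ T ^ 2)); [|apply Rinv_neq_0_compat; nra].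
  transitivity (d_t (d_t (selfsim U T x0)) 0 (x0 + T * y)
                - d_x (d_x (selfsim U T x0)) 0 (x0 + T * y)).
  - rewrite d_tt_selfsim, d_xx_selfsim by exact Hy. field. lra.
  - rewrite Hsol, d_t_selfsim_slice by exact Hy. field. lra.
Qed.

Lemma selfsim_profile_ode_B : solves_B (selfsim U T x0) (cone_open T x0) ->
  forall y, -1 < y < 1 ->
  (y ^ 2 - 1) * Derive (Derive U) y + 2 * y * Derive U y = (y ^ 2 - 1) * Derive U y ^ 2.
Proof.
  intros Hsol y Hy. specialize (Hsol 0 (x0 + T * y) (cone_open_slice y Hy)).
  apply (Rmult_eq_reg_r (/ T ^ 2)); [|apply Rinv_neq_0_compat; nra].
  transitivity (d_t (d_t (selfsim U T x0)) 0 (x0 + T * y)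
                - d_x (d_x (selfsim U T x0)) 0 (x0 + T * y)).
  - rewrite d_tt_selfsim, d_xx_selfsim by exact Hy. field. lra.
  - rewrite Hsol, d_t_selfsim_slice, d_x_selfsim_slice by exact Hy. field. lra.
Qed.

End SelfSimilar.

Lemma interior_point_near a b y d : a < b -> a <= y <= b -> 0 < d ->
  exists z, a < z < b /\ Rabs (z - y) < d.
Proof.
  intros Hab Hy Hd. set (e := Rmin d (b - a) / 3).
  assert (He : 0 < e /\ e < d /\ e <= (b - a) / 3).
  { unfold e. pose proof (Rmin_l d (b - a)). pose proof (Rmin_r d (b - a)).
    pose proof (Rmin_pos d (b - a) Hd ltac:(lra)). lra. }
  destruct (Rle_lt_dec y ((a + b) / 2)).
  - exists (y + e). split; [lra|]. rewrite Rabs_pos_eq; lra.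
  - exists (y - e). split; [lra|]. rewrite Rabs_left; lra.
Qed.

Lemma constant_on_closed_interval (U : R -> R) a b c : a < b ->
  (forall y, a <= y <= b ->
     filterlim U (within (fun z => a <= z <= b) (locally y)) (locally (U y))) ->
  (forall z, a < z < b -> U z = c) ->
  forall y, a <= y <= b -> U y = c.
Proof.
  intros Hab Hc Hint y Hy. apply cond_eq. intros eps Heps.
  destruct (Hc y Hy (fun r => Rabs (r - U y) < eps)) as [d Hd].
  { exists (mkposreal eps Heps). intros r Hr. exact Hr. }
  destruct (interior_point_near a b y d Hab Hy (cond_pos d)) as [z [Hz Hzy]].
  rewrite <- (Hint z Hz), Rabs_minus_sym. apply Hd; [exact Hzy | lra].
Qed.

Lemma smooth_closed_constant (U : R -> R) : smooth_closed U (-1) 1 ->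
  (forall y, -1 < y < 1 -> Derive U y = 0) -> ~ nonconstant_on U (-1) 1.
Proof.
  intros [Hc Hd] HU' [y1 [y2 [Hy1 [Hy2 Hne]]]].
  assert (Hint : forall z, -1 < z < 1 -> U z = U 0).
  { intros z Hz. apply (derive0_constant (-1) 1); [|lra|exact Hz].
    intros w Hw. rewrite <- (HU' w Hw). apply Derive_correct, (proj1 (Hd 1%nat) w Hw). }
  pose proof (constant_on_closed_interval U (-1) 1 (U 0) ltac:(lra) Hc Hint) as Hconst.
  apply Hne. rewrite (Hconst y1 Hy1), (Hconst y2 Hy2). reflexivity.
Qed.

Lemma no_selfsimilar_A T x0 : 0 < T ->
  ~ (exists U : R -> R, smooth_closed U (-1) 1 /\ nonconstant_on U (-1) 1 /\
       solves_A (selfsim U T x0) (cone_open T x0)).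
Proof.
  intros HT [U [Hs [Hn Hsol]]].
  pose proof (proj1 (proj2 Hs 1%nat)) as HU1. pose proof (proj1 (proj2 Hs 2%nat)) as HU2.
  apply (smooth_closed_constant U Hs); [|exact Hn].
  apply (profile_ode_zero (fun y => y ^ 2) primitiveA (Derive U)).
  - exact HU2.
  - exact (selfsim_profile_ode_A U T x0 HT HU1 HU2 Hsol).
  - intros y _. apply (ex_derive_continuous (fun y => y ^ 2)). auto_derive. exact I.
  - exact is_derive_primitiveA.
  - exact primitiveA_surjective.
Qed.

Lemma no_selfsimilar_B T x0 : 0 < T ->
  ~ (exists U : R -> R, smooth_closed U (-1) 1 /\ nonconstant_on U (-1) 1 /\
       solves_B (selfsim U T x0) (cone_open T x0)).
Proof.
  intros HT [U [Hs [Hn Hsol]]].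
  pose proof (proj1 (proj2 Hs 1%nat)) as HU1. pose proof (proj1 (proj2 Hs 2%nat)) as HU2.
  apply (smooth_closed_constant U Hs); [|exact Hn].
  apply (profile_ode_zero (fun y => y ^ 2 - 1) primitiveB (Derive U)).
  - exact HU2.
  - exact (selfsim_profile_ode_B U T x0 HT HU1 HU2 Hsol).
  - intros y _. apply (ex_derive_continuous (fun y => y ^ 2 - 1)). auto_derive. exact I.
  - exact is_derive_primitiveB.
  - exact primitiveB_surjective.
Qed.

(** * Elementary functions of (t, x) *)

Inductive rexpr :=
  | ECst (c : R) | ET | EX
  | EAdd (e1 e2 : rexpr) | EMul (e1 e2 : rexpr) | EOpp (e : rexpr)
  | EInv (e : rexpr) | ELn (e : rexpr) | EPow (e : rexpr) (n : nat).

Fixpoint eval (e : rexpr) (t x : R) : R :=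
  match e with
  | ECst c => c
  | ET => t
  | EX => x
  | EAdd e1 e2 => eval e1 t x + eval e2 t x
  | EMul e1 e2 => eval e1 t x * eval e2 t x
  | EOpp e => - eval e t x
  | EInv e => / eval e t x
  | ELn e => ln (eval e t x)
  | EPow e n => eval e t x ^ n
  end.

Fixpoint defined (e : rexpr) (t x : R) : Prop :=
  match e with
  | ECst _ | ET | EX => True
  | EAdd e1 e2 | EMul e1 e2 => defined e1 t x /\ defined e2 t x
  | EOpp e | EPow e _ => defined e t x
  | EInv e => defined e t x /\ eval e t x <> 0
  | ELn e => defined e t x /\ 0 < eval e t x
  end.

Fixpoint deriv (d : bool) (e : rexpr) : rexpr :=
  match e with
  | ECst _ => ECst 0
  | ET => ECst (if d then 1 else 0)
  | EX => ECst (if d then 0 else 1)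
  | EAdd e1 e2 => EAdd (deriv d e1) (deriv d e2)
  | EMul e1 e2 => EAdd (EMul (deriv d e1) e2) (EMul e1 (deriv d e2))
  | EOpp e => EOpp (deriv d e)
  | EInv e => EOpp (EMul (deriv d e) (EInv (EMul e e)))
  | ELn e => EMul (deriv d e) (EInv e)
  | EPow e n => EMul (ECst (INR n)) (EMul (EPow e (pred n)) (deriv d e))
  end.

Fixpoint iter_deriv (ds : list bool) (e : rexpr) : rexpr :=
  match ds with
  | nil => e
  | d :: ds' => deriv d (iter_deriv ds' e)
  end.

Definition along (d : bool) (t x s : R) : R * R := if d then (s, x) else (t, s).

Definition coord (d : bool) (t x : R) : R := if d then t else x.

Lemma defined_deriv d e t x : defined e t x -> defined (deriv d e) t x.
Proof.
  induction e; simpl; intros He; intuition;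
    try (apply Rmult_integral_contrapositive_currified; auto); try lra.
  match goal with H : _ * _ = 0 |- _ => apply Rmult_integral in H end; tauto.
Qed.

Lemma defined_iter_deriv ds e t x : defined e t x -> defined (iter_deriv ds e) t x.
Proof. induction ds; simpl; auto using defined_deriv. Qed.

Lemma is_derive_eq (f : R -> R) s l l' : is_derive f s l -> l = l' -> is_derive f s l'.
Proof. intros Hf <-; exact Hf. Qed.

Lemma along_coord d t x : along d t x (coord d t x) = (t, x).
Proof. destruct d; reflexivity. Qed.

Lemma is_derive_eval d e t x : defined e t x ->
  is_derive (fun s => eval e (fst (along d t x s)) (snd (along d t x s))) (coord d t x)
    (eval (deriv d e) t x).
Proof.
  induction e; simpl; intros He.
  - apply (is_derive_const c).
  - destruct d; [apply (is_derive_id t) | apply (is_derive_const t)].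
  - destruct d; [apply (is_derive_const x) | apply (is_derive_id x)].
  - destruct He as [H1 H2]. apply (is_derive_plus _ _ _ _ _ (IHe1 H1) (IHe2 H2)).
  - destruct He as [H1 H2].
    apply (is_derive_eq _ _ _ _ (is_derive_mult _ _ _ _ _ (IHe1 H1) (IHe2 H2) Rmult_comm)).
    rewrite along_coord. reflexivity.
  - apply (is_derive_opp _ _ _ (IHe He)).
  - destruct He as [H1 H2].
    assert (H2' : eval e (fst (along d t x (coord d t x))) (snd (along d t x (coord d t x))) <> 0)
      by (rewrite along_coord; exact H2).
    apply (is_derive_eq _ _ _ _ (is_derive_inv _ _ _ (IHe H1) H2')).
    rewrite along_coord. simpl. field. exact H2.
  - destruct He as [H1 H2].
    assert (Hln : is_derive ln
              (eval e (fst (along d t x (coord d t x))) (snd (along d t x (coord d t x))))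
              (/ eval e t x))
      by (rewrite along_coord; apply is_derive_Reals, derivable_pt_lim_ln, H2).
    apply (is_derive_eq _ _ _ _ (is_derive_comp ln
              (fun s => eval e (fst (along d t x s)) (snd (along d t x s))) _ _ _ Hln (IHe H1))).
    reflexivity.
  - apply (is_derive_eq _ _ _ _ (is_derive_pow _ n _ _ (IHe He))).
    rewrite along_coord. simpl. ring.
Qed.

Lemma continuous_eval e t x : defined e t x ->
  continuous (fun p : R * R => eval e (fst p) (snd p)) (t, x).
Proof.
  induction e; simpl; intros He.
  - apply continuous_const.
  - apply continuous_fst.
  - apply continuous_snd.
  - destruct He as [H1 H2]. apply (continuous_plus _ _ _ (IHe1 H1) (IHe2 H2)).
  - destruct He as [H1 H2]. apply (continuous_mult _ _ _ (IHe1 H1) (IHe2 H2)).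
  - apply (continuous_opp _ _ (IHe He)).
  - destruct He as [H1 H2]. apply (continuous_comp _ Rinv); [apply IHe, H1|].
    apply continuous_Rinv, H2.
  - destruct He as [H1 H2]. apply (continuous_comp _ ln); [apply IHe, H1|].
    apply continuous_ln, H2.
  - specialize (IHe He). induction n as [|n IHn]; simpl.
    + apply continuous_const.
    + apply (continuous_mult _ _ _ IHe IHn).
Qed.

Lemma defined_locally e t x : defined e t x ->
  locally (t, x) (fun p => defined e (fst p) (snd p)).
Proof.
  induction e; simpl; intros He; try apply filter_true; try (apply IHe, He).
  - destruct He. apply filter_and; auto.
  - destruct He. apply filter_and; auto.
  - destruct He as [H1 H2]. apply filter_and; [apply IHe, H1|].
    apply (locally_open_preimage (fun p => eval e (fst p) (snd p)) _ (fun r => r <> 0));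
      [apply continuous_eval, H1 | apply open_neq | exact H2].
  - destruct He as [H1 H2]. apply filter_and; [apply IHe, H1|].
    apply (locally_open_preimage (fun p => eval e (fst p) (snd p)) _ (fun r => 0 < r));
      [apply continuous_eval, H1 | apply open_gt | exact H2].
Qed.

Lemma locally_along (P : R * R -> Prop) d t x :
  locally (t, x) P -> locally (coord d t x) (fun s => P (along d t x s)).
Proof.
  intros [eps H]. exists eps. intros s Hs. apply H.
  destruct d; split; simpl; (exact Hs || apply ball_center).
Qed.

Lemma iter_partial_cons d ds u t x :
  iter_partial (d :: ds) u t x
  = Derive (fun s => iter_partial ds u (fst (along d t x s)) (snd (along d t x s))) (coord d t x).
Proof. destruct d; reflexivity. Qed.

Section ExprFunction.

Variables (u : R -> R -> R) (e : rexpr).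
Hypothesis Hu : forall t x, u t x = eval e t x.

Lemma iter_partial_eval ds t x : defined e t x ->
  iter_partial ds u t x = eval (iter_deriv ds e) t x.
Proof.
  revert t x. induction ds as [|d ds IH]; intros t x He; [apply Hu|].
  rewrite iter_partial_cons.
  rewrite (Derive_ext_loc _ (fun s => eval (iter_deriv ds e) (fst (along d t x s)) (snd (along d t x s)))).
  - apply is_derive_unique, is_derive_eval, defined_iter_deriv, He.
  - apply (filter_imp (fun s => defined e (fst (along d t x s)) (snd (along d t x s)))).
    + intros s Hs. apply IH, Hs.
    + apply (locally_along (fun p => defined e (fst p) (snd p))), defined_locally, He.
Qed.

Lemma ex_derive_iter_partial d ds t x : defined e t x ->
  ex_derive (fun s => iter_partial ds u (fst (along d t x s)) (snd (along d t x s))) (coord d t x).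
Proof.
  intros He.
  apply (ex_derive_ext_loc (fun s => eval (iter_deriv ds e) (fst (along d t x s)) (snd (along d t x s)))).
  - apply (filter_imp (fun s => defined e (fst (along d t x s)) (snd (along d t x s)))).
    + intros s Hs. symmetry. apply iter_partial_eval, Hs.
    + apply (locally_along (fun p => defined e (fst p) (snd p))), defined_locally, He.
  - eexists. apply is_derive_eval, defined_iter_deriv, He.
Qed.

Lemma smooth_near_eval t x : defined e t x -> smooth_near u t x.
Proof.
  intros He.
  destruct (defined_locally e t x He) as [eps Heps].
  exists eps. split; [apply cond_pos|]. intros t' x' Ht Hx ds.
  assert (He' : defined e t' x') by (apply (Heps (t', x')); split; assumption).
  split; [|split].
  - exact (ex_derive_iter_partial true ds t' x' He').
  - exact (ex_derive_iter_partial false ds t' x' He').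
  - apply (continuous_ext_loc _ (fun p : R * R => eval (iter_deriv ds e) (fst p) (snd p))).
    + apply (filter_imp (fun p : R * R => defined e (fst p) (snd p))).
      * intros p Hp. symmetry. apply iter_partial_eval, Hp.
      * apply defined_locally, He'.
    + apply continuous_eval, defined_iter_deriv, He'.
Qed.

End ExprFunction.

(** * The explicit blow-up solutions *)

Definition ratio_expr (T x0 : R) : rexpr :=
  EMul (EAdd EX (EOpp (ECst x0))) (EInv (EAdd (ECst T) (EOpp ET))).

Definition log_time_expr (T : R) : rexpr := ELn (EAdd (ECst 1) (EOpp (EMul ET (EInv (ECst T))))).

Definition argA_expr (b : betaA) (alpha T x0 : R) : rexpr :=
  match b with
  | Beta0 => EAdd (ECst 1) (EOpp (EMul (ECst (sqrt (1 - alpha))) (ratio_expr T x0)))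
  | BetaInf => EAdd (ECst 1) (EMul (ECst (sqrt (1 - alpha))) (ratio_expr T x0))
  end.

Definition uA_expr (b : betaA) (alpha kappa T x0 : R) : rexpr :=
  EAdd (EAdd (EMul (EOpp (ECst alpha)) (log_time_expr T))
             (EMul (EOpp (ECst alpha)) (ELn (argA_expr b alpha T x0)))) (ECst kappa).

Lemma uA_eval b alpha kappa T x0 t x :
  uA b alpha kappa T x0 t x = eval (uA_expr b alpha kappa T x0) t x.
Proof. destruct b; reflexivity. Qed.

Lemma cone_ratio_bound T x0 t x : cone T x0 t x ->
  0 < T - t /\ -1 <= (x - x0) / (T - t) <= 1.
Proof.
  intros [[Ht HtT] Hx]. split; [lra|]. apply Rabs_le_between.
  unfold Rdiv. rewrite Rabs_mult, Rabs_inv, (Rabs_pos_eq (T - t)) by lra.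
  apply (Rmult_le_reg_r (T - t)); [lra|]. rewrite Rmult_assoc, Rinv_l; lra.
Qed.

Lemma log_time_pos T t : 0 < T -> t < T -> 0 < 1 - t / T.
Proof.
  intros HT Ht. apply Rlt_0_minus, Rlt_div_l; lra.
Qed.

Lemma argA_pos b alpha y : 0 < alpha <= 1 -> -1 <= y <= 1 -> 0 < argA b alpha y.
Proof.
  intros Ha Hy.
  assert (Hs : 0 <= sqrt (1 - alpha) < 1).
  { split; [apply sqrt_pos|]. rewrite <- sqrt_1 at 2. apply sqrt_lt_1_alt. lra. }
  pose proof (Rmult_le_compat_l _ _ _ (proj1 Hs) (proj1 Hy)).
  pose proof (Rmult_le_compat_l _ _ _ (proj1 Hs) (proj2 Hy)).
  destruct b; simpl; lra.
Qed.

Lemma defined_uA_expr b alpha kappa T x0 t x : 0 < alpha <= 1 -> 0 < T -> cone T x0 t x ->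
  defined (uA_expr b alpha kappa T x0) t x.
Proof.
  intros Ha HT Hc. destruct (cone_ratio_bound T x0 t x Hc) as [HtT Hy].
  pose proof (argA_pos b alpha _ Ha Hy) as Harg.
  pose proof (log_time_pos T t HT (proj2 (proj1 Hc))).
  destruct b; simpl in *; unfold Rminus, Rdiv in *; repeat split; lra.
Qed.

Lemma solves_A_uA b alpha kappa T x0 : 0 < alpha <= 1 -> 0 < T ->
  solves_A (uA b alpha kappa T x0) (cone T x0).
Proof.
  intros Ha HT t x Hc.
  pose proof (defined_uA_expr b alpha kappa T x0 t x Ha HT Hc) as He.
  destruct (cone_ratio_bound T x0 t x Hc) as [HtT Hy].
  pose proof (argA_pos b alpha _ Ha Hy) as Harg.
  change (iter_partial (true :: true :: nil) (uA b alpha kappa T x0) t x -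
          iter_partial (false :: false :: nil) (uA b alpha kappa T x0) t x =
          (iter_partial (true :: nil) (uA b alpha kappa T x0) t x) ^ 2).
  rewrite !(iter_partial_eval _ _ (uA_eval b alpha kappa T x0)) by exact He.
  assert (Hc2 : sqrt (1 - alpha) * sqrt (1 - alpha) = 1 - alpha) by (apply sqrt_sqrt; lra).
  pose proof (log_time_pos T t HT (proj2 (proj1 Hc))).
  clear He Hc. set (y := (x - x0) / (T - t)) in *.
  replace x with (x0 + y * (T - t)) by (unfold y; field; lra). clearbody y.
  destruct b; simpl in *; unfold Rminus, Rdiv in *;
    set (c := sqrt (1 + - alpha)) in *; clearbody c; replace alpha with (1 + - (c * c)) by lra;
    field; repeat split; nra.
Qed.

Lemma log_blowup a kappa T M : 0 < a -> 0 < T ->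
  exists delta, 0 < delta /\
    forall t, T - delta < t < T -> M < Rabs (- a * ln (1 - t / T) + kappa).
Proof.
  intros Ha HT. set (K := (Rabs M + Rabs kappa) / a).
  exists (T * exp (- K)). split; [apply Rmult_lt_0_compat; [exact HT | apply exp_pos]|].
  intros t Ht.
  assert (Hq : 0 < 1 - t / T < exp (- K)).
  { split; [apply log_time_pos; lra|].
    replace (1 - t / T) with ((T - t) / T) by (field; lra).
    apply Rlt_div_l; lra. }
  assert (Hln : ln (1 - t / T) < - K) by (rewrite <- (ln_exp (- K)); apply ln_increasing; lra).
  assert (HaK : a * K = Rabs M + Rabs kappa) by (unfold K; field; lra).
  pose proof (Rle_abs M). pose proof (Rabs_pos M). pose proof (Rle_abs (- kappa)).
  assert (a * K < - a * ln (1 - t / T)) by nra.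
  rewrite Rabs_Ropp in *. rewrite Rabs_pos_eq; lra.
Qed.

Lemma blows_up_at_of_center (u : R -> R -> R) a kappa T x0 : 0 < a -> 0 < T ->
  (forall t, t < T -> u t x0 = - a * ln (1 - t / T) + kappa) -> blows_up_at u T x0.
Proof.
  intros Ha HT Hu M. destruct (log_blowup a kappa T M Ha HT) as [delta [Hdelta Hblow]].
  exists delta. split; [exact Hdelta|]. intros t Ht. exists x0. split.
  - rewrite Rminus_diag, Rabs_R0. lra.
  - rewrite Hu by lra. apply Hblow, Ht.
Qed.

Lemma uA_center b alpha kappa T x0 t :
  uA b alpha kappa T x0 t x0 = - alpha * ln (1 - t / T) + kappa.
Proof.
  unfold uA, UA. rewrite Rminus_diag, Rdiv_0_l.
  replace (argA b alpha 0) with 1 by (destruct b; simpl; ring).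
  rewrite ln_1. ring.
Qed.

Definition argB_expr (n : nat) (beta T x0 : R) : rexpr :=
  EAdd (EPow (EAdd (ECst 1) (ratio_expr T x0)) n)
       (EMul (ECst beta) (EPow (EAdd (ECst 1) (EOpp (ratio_expr T x0))) n)).

Definition uB_expr (n : nat) (beta kappa T x0 : R) : rexpr :=
  EAdd (EAdd (EMul (EOpp (ECst (INR n))) (log_time_expr T))
             (EAdd (EOpp (ELn (argB_expr n beta T x0))) (ECst (ln (1 + beta))))) (ECst kappa).

Lemma uB_eval n beta kappa T x0 t x :
  uB n beta kappa T x0 t x = eval (uB_expr n beta kappa T x0) t x.
Proof. reflexivity. Qed.

Lemma argB_pos n beta y : (1 <= n)%nat -> 0 < beta -> -1 <= y <= 1 -> 0 < argB n beta y.
Proof.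
  intros Hn Hb Hy. unfold argB.
  destruct (Req_dec y (-1)) as [->|Hy1].
  - replace (1 + -1) with 0 by ring. rewrite pow_i by lia.
    assert (0 < beta * (1 - -1) ^ n) by (apply Rmult_lt_0_compat; [exact Hb | apply pow_lt; lra]).
    lra.
  - assert (0 < (1 + y) ^ n) by (apply pow_lt; lra).
    assert (0 <= beta * (1 - y) ^ n) by (apply Rmult_le_pos; [lra | apply pow_le; lra]).
    lra.
Qed.

Lemma defined_uB_expr n beta kappa T x0 t x : (1 <= n)%nat -> 0 < beta -> 0 < T ->
  cone T x0 t x -> defined (uB_expr n beta kappa T x0) t x.
Proof.
  intros Hn Hb HT Hc. destruct (cone_ratio_bound T x0 t x Hc) as [HtT Hy].
  pose proof (argB_pos n beta _ Hn Hb Hy) as Harg. unfold argB in Harg.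
  pose proof (log_time_pos T t HT (proj2 (proj1 Hc))).
  simpl in *; unfold Rminus, Rdiv in *; repeat split; lra.
Qed.

Lemma solves_B_uB n beta kappa T x0 : (1 <= n)%nat -> 0 < beta -> 0 < T ->
  solves_B (uB n beta kappa T x0) (cone T x0).
Proof.
  intros Hn Hb HT t x Hc.
  pose proof (defined_uB_expr n beta kappa T x0 t x Hn Hb HT Hc) as He.
  destruct (cone_ratio_bound T x0 t x Hc) as [HtT Hy].
  pose proof (argB_pos n beta _ Hn Hb Hy) as Harg. unfold argB in Harg.
  pose proof (log_time_pos T t HT (proj2 (proj1 Hc))).
  change (iter_partial (true :: true :: nil) (uB n beta kappa T x0) t x -
          iter_partial (false :: false :: nil) (uB n beta kappa T x0) t x =
          (iter_partial (true :: nil) (uB n beta kappa T x0) t x) ^ 2 -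
          (iter_partial (false :: nil) (uB n beta kappa T x0) t x) ^ 2).
  rewrite !(iter_partial_eval _ _ (uB_eval n beta kappa T x0)) by exact He.
  clear He Hc. set (y := (x - x0) / (T - t)) in *.
  replace x with (x0 + y * (T - t)) by (unfold y; field; lra). clearbody y.
  assert (Hsq : 0 < (T - t) * (T - t)) by nra.
  destruct n as [|[|m]]; [lia| |]; simpl in *; unfold Rminus, Rdiv in *;
    replace ((x0 + y * (T + - t) + - x0) * / (T + - t)) with y by (field; lra);
    replace (x0 + y * (T + - t) + - x0) with (y * (T + - t)) by ring;
    field; repeat split; nra.
Qed.

Lemma uB_center n beta kappa T x0 t :
  uB n beta kappa T x0 t x0 = - INR n * ln (1 - t / T) + kappa.
Proof.
  unfold uB, UB, argB. rewrite Rminus_diag, Rdiv_0_l, Rplus_0_r, Rminus_0_r, pow1, Rmult_1_r.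
  ring.
Qed.

Theorem theorem1p1 :
  (* Part 1: no smooth non-constant exact self-similar blow-up solution *)
  (forall T x0 : R, 0 < T ->
     ~ (exists U : R -> R, smooth_closed U (-1) 1 /\ nonconstant_on U (-1) 1 /\
          solves_A (selfsim U T x0) (cone_open T x0))) /\
  (forall T x0 : R, 0 < T ->
     ~ (exists U : R -> R, smooth_closed U (-1) 1 /\ nonconstant_on U (-1) 1 /\
          solves_B (selfsim U T x0) (cone_open T x0))) /\
  (* Part 2 (A): alpha in (0,1], beta in {0, infinity} *)
  (forall (b : betaA) (alpha kappa T x0 : R), 0 < alpha <= 1 -> 0 < T ->
     (forall t x, cone T x0 t x -> 0 < argA b alpha ((x - x0) / (T - t))) /\
     smooth_on (uA b alpha kappa T x0) (cone T x0) /\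
     solves_A (uA b alpha kappa T x0) (cone T x0) /\
     blows_up_at (uA b alpha kappa T x0) T x0) /\
  (* Part 2 (B): alpha in Z_+ = {1,2,...}, beta in (0,infinity) *)
  (forall (alpha : nat) (beta kappa T x0 : R), (1 <= alpha)%nat -> 0 < beta -> 0 < T ->
     (forall t x, cone T x0 t x -> 0 < argB alpha beta ((x - x0) / (T - t))) /\
     smooth_on (uB alpha beta kappa T x0) (cone T x0) /\
     solves_B (uB alpha beta kappa T x0) (cone T x0) /\
     blows_up_at (uB alpha beta kappa T x0) T x0).
Proof.
  split; [exact no_selfsimilar_A|]. split; [exact no_selfsimilar_B|]. split.
  - intros b alpha kappa T x0 Ha HT. repeat split.
    + intros t x Hc. apply argA_pos, (cone_ratio_bound T x0 t x Hc). exact Ha.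
    + intros t x Hc. apply (smooth_near_eval _ _ (uA_eval b alpha kappa T x0)).
      apply defined_uA_expr; assumption.
    + apply solves_A_uA; assumption.
    + apply (blows_up_at_of_center _ alpha kappa); [lra | exact HT | intros t _].
      apply uA_center.
  - intros n beta kappa T x0 Hn Hb HT. repeat split.
    + intros t x Hc. apply argB_pos, (cone_ratio_bound T x0 t x Hc); assumption.
    + intros t x Hc. apply (smooth_near_eval _ _ (uB_eval n beta kappa T x0)).
      apply defined_uB_expr; assumption.
    + apply solves_B_uB; assumption.
    + apply (blows_up_at_of_center _ (INR n) kappa); [apply lt_0_INR; lia | exact HT | intros t _].
      apply uB_center.
Qed.
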